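(* Fix $n\in\mathbb N$ and positive integers $m_1,m_2$. Let $\mathbf g_{kj}(t)$, $k,j\in\{1,2\}$, $t=1,\dots,n$, be complex random variables i.i.d. with a continuous distribution, $\mathbf G^n_{kj}$ the $n\times n$ diagonal matrix with diagonal entries $\mathbf g_{kj}(1),\dots,\mathbf g_{kj}(n)$, and $\mathbf V^n_1\in\mathbb C^{n\times m_1}$, $\mathbf V^n_2\in\mathbb C^{n\times m_2}$ matrices whose $t$-th rows $\vec{\mathbf v}_1(t)^\top,\vec{\mathbf v}_2(t)^\top$ are deterministic functions of $\mathcal G^{t-1}=\{\mathbf g_{kj}(s):k,j\in\{1,2\},s\le t-1\}$. For $i\in\{1,\dots,n\}$ let $\mathcal A_i$ be the event $\mathrm{rank}[\mathbf G^{i}_{21}\mathbf V^{i}_1\ \ \mathbf G^{i}_{22}\mathbf V^{i}_2]=\mathrm{rank}[\mathbf G^{i-1}_{21}\mathbf V^{i-1}_1\ \ \mathbf G^{i-1}_{22}\mathbf V^{i-1}_2]$, and $\mathcal B_i$ the event that both $[\vec{\mathbf v}_1(i)^\top\ \vec 0_{1\times m_2}]$ and $[\vec 0_{1\times m_1}\ \vec{\mathbf v}_2(i)^\top]$ lie in $\mathrm{rowspan}[\mathbf G^{i-1}_{21}\mathbf V^{i-1}_1\ \ \mathbf G^{i-1}_{22}\mathbf V^{i-1}_2]$. Then $\Pr\big(\bigcup_{i=1}^n(\mathcal A_i\cap\mathcal B_i^c)\big)=0$.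
   Context: For $t\le n$, $\mathbf G^{t}_{kj}$ is the leading $t\times t$ principal submatrix of $\mathbf G^n_{kj}$ and $\mathbf V^{t}_j$ consists of the first $t$ rows of $\mathbf V^n_j$; for $t=0$ the matrix $[\mathbf G^0_{21}\mathbf V^0_1\ \ \mathbf G^0_{22}\mathbf V^0_2]$ is the zero row (rank 0, rowspan $\{0\}$). *)

From HB Require Import structures.
From mathcomp Require Import all_boot all_order all_algebra.
From mathcomp Require Import all_classical all_reals all_analysis.
From mathcomp Require Import complex.
Set Implicit Arguments. Unset Strict Implicit. Unset Printing Implicit Defensive.
Import Order.TTheory GRing.Theory Num.Theory.
Local Open Scope classical_set_scope.
Local Open Scope ring_scope.

(* Borel sigma-algebra on C = R[i] (generated by Borel sets of Re and Im,
   i.e. the Borel sets of R^2). *)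
Definition CBorel (R : realType) : set (set R[i]) :=
  <<s [set (@complex.Re R) @^-1` B | B in measurable]
      `|` [set (@complex.Im R) @^-1` B | B in measurable] >>.
Arguments CBorel R : clear implicits.

Definition preimg_sys d (T : measurableType d) (R : realType)
  (X : T -> R[i]) : set (set T) := [set X @^-1` B | B in CBorel R].

Definition c_rv d (T : measurableType d) (R : realType) (X : T -> R[i]) :=
  forall B, CBorel R B -> measurable (X @^-1` B).

Definition mutually_independent d (T : measurableType d) (R : realType)
  (P : probability T R) (I : finType) (X : I -> T -> R[i]) :=
  forall A : I -> set T, (forall i, preimg_sys (X i) (A i)) ->
    P (\bigcap_(i in [set: I]) A i) = (\prod_(i : I) P (A i))%E.

(* index conventions: k,j in {1,2} are represented by 'I_2, with 1 |-> i1, 2 |-> i2;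
   time t in {1,..,n} is represented by t-1 in {0,..,n-1}. *)
Definition i1 : 'I_2 := ord0.
Definition i2 : 'I_2 := ord_max.

Definition past_sigma d (T : measurableType d) (R : realType)
  (g : 'I_2 -> 'I_2 -> nat -> T -> R[i]) (t : nat) : set (set T) :=
  <<s [set A | exists k j s, (s < t)%N /\ preimg_sys (g k j s) A] >>.

(* Y is a (measurable) deterministic function of the g_kj(s), s < t *)
Definition past_measurable d (T : measurableType d) (R : realType)
  (g : 'I_2 -> 'I_2 -> nat -> T -> R[i]) (t : nat) (Y : T -> R[i]) :=
  forall B, CBorel R B -> past_sigma g t (Y @^-1` B).

(* [G^t_21 V^t_1  G^t_22 V^t_2] : its row s (0-indexed) is
   [g21(s) v1(s)^T , g22(s) v2(s)^T]; for t = 0 it has no rows. *)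
Definition Mat (T : Type) (R : realType) (m1 m2 : nat)
  (g : 'I_2 -> 'I_2 -> nat -> T -> R[i])
  (v1 : nat -> T -> 'rV[R[i]]_m1) (v2 : nat -> T -> 'rV[R[i]]_m2)
  (t : nat) (w : T) : 'M[R[i]]_(t, m1 + m2) :=
  \matrix_(s < t) row_mx (g i2 i1 s w *: v1 s w) (g i2 i2 s w *: v2 s w).

(* event A_{i+1} (0-indexed i) : rank does not increase at step i+1 *)
Definition Aev (T : Type) (R : realType) (m1 m2 : nat)
  (g : 'I_2 -> 'I_2 -> nat -> T -> R[i])
  (v1 : nat -> T -> 'rV[R[i]]_m1) (v2 : nat -> T -> 'rV[R[i]]_m2)
  (i : nat) : set T :=
  [set w | \rank (Mat g v1 v2 i.+1 w) = \rank (Mat g v1 v2 i w)].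

(* event B_{i+1} (0-indexed i) *)
Definition Bev (T : Type) (R : realType) (m1 m2 : nat)
  (g : 'I_2 -> 'I_2 -> nat -> T -> R[i])
  (v1 : nat -> T -> 'rV[R[i]]_m1) (v2 : nat -> T -> 'rV[R[i]]_m2)
  (i : nat) : set T :=
  [set w | (row_mx (v1 i w) 0 <= Mat g v1 v2 i w)%MS
           /\ (row_mx 0 (v2 i w) <= Mat g v1 v2 i w)%MS].

From HB Require Import structures.
From mathcomp Require Import all_boot all_order all_algebra.
From mathcomp Require Import all_classical all_reals all_analysis.
From mathcomp Require Import complex measurable_realfun.
From mathcomp Require Import ring.
Set Implicit Arguments. Unset Strict Implicit. Unset Printing Implicit Defensive.
Import Order.TTheory GRing.Theory Num.Theory.
Local Open Scope classical_set_scope.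
Local Open Scope ring_scope.

(* Fix a step i, let W be the matrix of the first i rows, and let u1 = [v1(i) 0]
   and u2 = [0 v2(i)]; all three are functions of the past. If the rank does not
   grow at step i, the new row g21(i) u1 + g22(i) u2 lies in the row space of W.
   For a nonsingular maximal minor of W, Cramer's rule describes that row space
   as the common kernel of finitely many linear forms beta_k ([minor_residual])
   whose coefficients are polynomials in the entries of W. Hence
   g21(i) beta_k(u1) + g22(i) beta_k(u2) = 0 for every k, while B_i failing means
   that some beta_k(u1) or beta_k(u2) is nonzero. Each of g21(i), g22(i) is
   independent of the other one and of the past, and has no atoms, so by Fubini it
   solves an affine equation whose coefficients are measurable in the others, with
   nonzero leading coefficient, only on a null set. There are finitely many
   choices of minor and of k. *)

Section minors.
Variable F : fieldType.

Lemma mxrank_colsub_le t m r (X : 'M[F]_(t, m)) (h : 'I_r -> 'I_m) :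
  (\rank (colsub h X) <= \rank X)%N.
Proof. by rewrite -[X in colsub _ X]mulmx1 -mulmx_colsub mxrankM_maxl. Qed.

Lemma mxrank_mxsub_le t m r s (M : 'M[F]_(t, m)) (f : 'I_r -> 'I_t)
    (h : 'I_s -> 'I_m) :
  (\rank (mxsub f h M) <= \rank M)%N.
Proof.
by rewrite mxsubcr (leq_trans (mxrank_colsub_le _ _)) ?mxrankS ?rowsub_sub.
Qed.

Lemma minor_neq0_rank t m r (M : 'M[F]_(t, m)) (f : 'I_r -> 'I_t)
    (h : 'I_r -> 'I_m) :
  \det (mxsub f h M) != 0 -> (r <= \rank M)%N.
Proof.
move=> detN0; have : mxsub f h M \in unitmx by rewrite unitmxE unitfE.
by move/mxrank_unit <-; exact: mxrank_mxsub_le.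
Qed.

Lemma exists_rank_minor t m (M : 'M[F]_(t, m)) :
  exists (f : 'I_(\rank M) -> 'I_t) (h : 'I_(\rank M) -> 'I_m),
    \det (mxsub f h M) != 0.
Proof.
have rowsub_free : row_full (rowsub (maxrankfun M) M)^T.
  by rewrite /row_full mxrank_tr; exact: maxrowsub_free.
exists (maxrankfun M), (fullrankfun rowsub_free).
have := fullrowsub_unit rowsub_free; rewrite unitmxE unitfE -det_tr.
by congr (\det _ != 0); apply/matrixP => i j; rewrite !mxE.
Qed.

(* [det A *: (y - y_h *m A^-1 *m W_f)] for the minor [A := W[f, h]], written
   with the adjugate so that it is a polynomial in the entries of [W] and [y]. *)
Definition minor_residual t m r (W : 'M[F]_(t, m)) (f : 'I_r -> 'I_t)
    (h : 'I_r -> 'I_m) (y : 'rV[F]_m) (k : 'I_m) : F :=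
  \det (mxsub f h W) * y 0 k
  - (colsub h y *m \adj (mxsub f h W) *m col k (rowsub f W)) 0 0.

Lemma minor_residual_lin t m r (W : 'M[F]_(t, m)) (f : 'I_r -> 'I_t)
    (h : 'I_r -> 'I_m) (a b : F) (y z : 'rV[F]_m) k :
  minor_residual W f h (a *: y + b *: z) k =
    a * minor_residual W f h y k + b * minor_residual W f h z k.
Proof.
rewrite /minor_residual.
have -> : colsub h (a *: y + b *: z) = a *: colsub h y + b *: colsub h z.
  by apply/matrixP => i j; rewrite !mxE.
by rewrite !mulmxDl -!scalemxAl !mxE; ring.
Qed.

Lemma minor_residualP t m (W : 'M[F]_(t, m)) (f : 'I_(\rank W) -> 'I_t)
    (h : 'I_(\rank W) -> 'I_m) (y : 'rV[F]_m) :
  \det (mxsub f h W) != 0 ->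
  (y <= W)%MS <-> (forall k, minor_residual W f h y k = 0).
Proof.
set A := mxsub f h W; set Wf := rowsub f W => detN0.
have Aunit : A \in unitmx by rewrite unitmxE unitfE.
have residualE k : minor_residual W f h y k =
    \det A * (y - colsub h y *m invmx A *m Wf) 0 k.
  rewrite /minor_residual -/A -/Wf /invmx Aunit.
  rewrite [in RHS]mxE [X in y 0 k + X]mxE mulrDr mulrN; congr (_ - _).
  rewrite -scalemxAr -scalemxAl [in RHS]mxE mulrA mulfV // mul1r.
  by rewrite !mxE; apply: eq_bigr => j _; rewrite !mxE.
have A_colsub : A = colsub h Wf by rewrite /A mxsubcr.
have W_Wf : (W <= Wf)%MS.
  have /leqifP := mxrank_leqif_sup (rowsub_sub f W); rewrite -/Wf.
  case: ifP => // _; rewrite ltnNge (leq_trans _ (mxrank_colsub_le Wf h)) //.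
  by rewrite -A_colsub mxrank_unit.
have y_decomp : (y <= W)%MS <-> y = colsub h y *m invmx A *m Wf.
  split=> [/submx_trans/(_ W_Wf)/submxP[c ->]|->].
    by rewrite -mulmx_colsub -A_colsub mulmxK.
  exact: submx_trans (submxMl _ _) (rowsub_sub f W).
rewrite y_decomp; split=> [yE k|y0].
  by rewrite residualE -yE subrr mxE mulr0.
apply/eqP; rewrite -subr_eq0; apply/eqP/matrixP => i k; rewrite ord1.
move: (y0 k); rewrite residualE => /eqP.
by rewrite mulf_eq0 (negbTE detN0) /= => /eqP ->; rewrite mxE.
Qed.

Lemma submx_rank_col_mx t m (W : 'M[F]_(t, m)) (u : 'rV[F]_m) :
  (u <= W)%MS <-> \rank (col_mx W u) = \rank W.
Proof.
have /mxrank_leqif_sup[_] : (W <= col_mx W u)%MS by rewrite -addsmxE addsmxSl.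
rewrite col_mx_sub submx_refl /= => rankE.
by split=> [uW|rk]; [apply/esym/eqP; rewrite rankE|rewrite -rankE rk].
Qed.

End minors.

Section complex_random_variables.
Context (R : realType) d (T : measurableType d).
Local Notation Re := (@complex.Re R).
Local Notation Im := (@complex.Im R).
Implicit Types f g : T -> R[i].

Lemma c_rvP f : c_rv f <->
  measurable_fun setT (fun x => Re (f x)) /\ measurable_fun setT (fun x => Im (f x)).
Proof.
split=> [cf|[mRe mIm] B].
  by split=> _ B mB; rewrite setTI; apply: (cf (_ @^-1` B));
    apply: sub_gen_smallest; [left|right]; exists B.
apply: (@smallest_sub _ _ _ [set B | measurable (f @^-1` B)]) B.
  split=> [|A /= mA|F mF] /=; first by rewrite preimage_set0.
    by rewrite setTD preimage_setC; exact: measurableC.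
  by rewrite preimage_bigcup; exact: bigcupT_measurable.
by move=> _ [[B mB <-]|[B mB <-]] /=; rewrite -[_ @^-1` _]setTI;
  [exact: mRe|exact: mIm].
Qed.

Lemma c_rv_cst (c : R[i]) : c_rv (fun _ : T => c).
Proof. by apply/c_rvP; split; exact: measurable_cst. Qed.

Lemma c_rvD f g : c_rv f -> c_rv g -> c_rv (fun x => f x + g x).
Proof.
move=> /c_rvP[fRe fIm] /c_rvP[gRe gIm]; apply/c_rvP; split.
  have -> : (fun x => Re (f x + g x)) = (fun x => Re (f x)) \+ (fun x => Re (g x)).
    by apply/funext => x /=; case: (f x); case: (g x).
  exact: measurable_funD.
have -> : (fun x => Im (f x + g x)) = (fun x => Im (f x)) \+ (fun x => Im (g x)).
  by apply/funext => x /=; case: (f x); case: (g x).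
exact: measurable_funD.
Qed.

Lemma c_rvN f : c_rv f -> c_rv (fun x => - f x).
Proof.
move=> /c_rvP[fRe fIm]; apply/c_rvP; split.
  have -> : (fun x => Re (- f x)) = \- (fun x => Re (f x)).
    by apply/funext => x /=; case: (f x).
  exact: measurable_funN.
have -> : (fun x => Im (- f x)) = \- (fun x => Im (f x)).
  by apply/funext => x /=; case: (f x).
exact: measurable_funN.
Qed.

Lemma c_rvB f g : c_rv f -> c_rv g -> c_rv (fun x => f x - g x).
Proof. by move=> cf /c_rvN; exact: c_rvD. Qed.

Lemma c_rvM f g : c_rv f -> c_rv g -> c_rv (fun x => f x * g x).
Proof.
move=> /c_rvP[fRe fIm] /c_rvP[gRe gIm]; apply/c_rvP; split.
  have -> : (fun x => Re (f x * g x)) =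
      (fun x => Re (f x)) \* (fun x => Re (g x))
      \- (fun x => Im (f x)) \* (fun x => Im (g x)).
    by apply/funext => x /=; case: (f x); case: (g x).
  by apply: measurable_funB; exact: measurable_funM.
have -> : (fun x => Im (f x * g x)) =
    (fun x => Re (f x)) \* (fun x => Im (g x))
    \+ (fun x => Im (f x)) \* (fun x => Re (g x)).
  by apply/funext => x /=; case: (f x) => ? ?; case: (g x) => ? ? /=; rewrite addrC.
by apply: measurable_funD; exact: measurable_funM.
Qed.

Lemma c_rv_sum (I : Type) (r : seq I) (P : pred I) (F : I -> T -> R[i]) :
  (forall i, P i -> c_rv (F i)) -> c_rv (fun x => \sum_(i <- r | P i) F i x).
Proof.
move=> cF; elim: r => [|a r IH]; under eq_fun do rewrite ?big_nil ?big_cons.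
  exact: c_rv_cst.
by case Pa: (P a) => //; apply: c_rvD => //; exact: cF.
Qed.

Lemma c_rv_prod (I : Type) (r : seq I) (P : pred I) (F : I -> T -> R[i]) :
  (forall i, P i -> c_rv (F i)) -> c_rv (fun x => \prod_(i <- r | P i) F i x).
Proof.
move=> cF; elim: r => [|a r IH]; under eq_fun do rewrite ?big_nil ?big_cons.
  exact: c_rv_cst.
by case Pa: (P a) => //; apply: c_rvM => //; exact: cF.
Qed.

Lemma c_rv_measurable_eq f (c : R[i]) : c_rv f -> measurable [set x | f x = c].
Proof.
move=> /c_rvP[fRe fIm].
have -> : [set x | f x = c] =
    (fun x => Re (f x)) @^-1` [set Re c] `&` (fun x => Im (f x)) @^-1` [set Im c].
  apply/seteqP; split=> x /=; first by move=> ->.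
  by case: c => a b; case: (f x) => a' b' /= [-> ->].
by apply: measurableI; rewrite -[_ @^-1` _]setTI; [exact: fRe|exact: fIm].
Qed.

Lemma c_rv_measurable_neq f (c : R[i]) : c_rv f -> measurable [set x | f x != c].
Proof.
move=> /(c_rv_measurable_eq c)/measurableC.
by congr measurable; apply/seteqP; split=> x /= /eqP.
Qed.

End complex_random_variables.

Section matrix_random_variables.
Context (R : realType) d (T : measurableType d).

Definition mx_rv p q (M : T -> 'M[R[i]]_(p, q)) := forall i j, c_rv (fun x => M x i j).

Lemma mx_rv_cst p q (A : 'M[R[i]]_(p, q)) : mx_rv (fun _ => A).
Proof. by move=> i j; exact: c_rv_cst. Qed.

Lemma mx_rvZ p q (a : T -> R[i]) (A : T -> 'M[R[i]]_(p, q)) :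
  c_rv a -> mx_rv A -> mx_rv (fun x => a x *: A x).
Proof. by move=> ca cA i j; under eq_fun do rewrite mxE; exact: c_rvM. Qed.

Lemma mx_rv_mxsub p q p' q' (M : T -> 'M[R[i]]_(p, q)) (f : 'I_p' -> 'I_p)
    (g : 'I_q' -> 'I_q) :
  mx_rv M -> mx_rv (fun x => mxsub f g (M x)).
Proof. by move=> cM i j; under eq_fun do rewrite mxE; exact: cM. Qed.

Lemma mx_rv_mul p q r (A : T -> 'M[R[i]]_(p, q)) (B : T -> 'M[R[i]]_(q, r)) :
  mx_rv A -> mx_rv B -> mx_rv (fun x => A x *m B x).
Proof.
move=> cA cB i j; under eq_fun do rewrite mxE.
by apply: c_rv_sum => k _; exact: c_rvM.
Qed.

Lemma mx_rv_row_mx p q1 q2 (A : T -> 'M[R[i]]_(p, q1)) (B : T -> 'M[R[i]]_(p, q2)) :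
  mx_rv A -> mx_rv B -> mx_rv (fun x => row_mx (A x) (B x)).
Proof.
move=> cA cB i j; rewrite -(fintype.splitK j); case: (fintype.split j) => k /=.
  by under eq_fun do rewrite row_mxEl; exact: cA.
by under eq_fun do rewrite row_mxEr; exact: cB.
Qed.

Lemma mx_rv_col_mx p1 p2 q (A : T -> 'M[R[i]]_(p1, q)) (B : T -> 'M[R[i]]_(p2, q)) :
  mx_rv A -> mx_rv B -> mx_rv (fun x => col_mx (A x) (B x)).
Proof.
move=> cA cB i j; rewrite -(fintype.splitK i); case: (fintype.split i) => k /=.
  by under eq_fun do rewrite col_mxEu; exact: cA.
by under eq_fun do rewrite col_mxEd; exact: cB.
Qed.

Lemma mx_rv_rows p q (A : 'I_p -> T -> 'rV[R[i]]_q) :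
  (forall i, mx_rv (A i)) -> mx_rv (fun x => \matrix_(i < p) A i x).
Proof. by move=> cA i j; under eq_fun do rewrite mxE; exact: cA. Qed.

Lemma c_rv_det p (A : T -> 'M[R[i]]_p) : mx_rv A -> c_rv (fun x => \det (A x)).
Proof.
move=> cA; apply: c_rv_sum => s _; apply: c_rvM; first exact: c_rv_cst.
by apply: c_rv_prod => k _; exact: cA.
Qed.

Lemma mx_rv_adj p (A : T -> 'M[R[i]]_p) : mx_rv A -> mx_rv (fun x => \adj (A x)).
Proof.
move=> cA i j; under eq_fun do rewrite mxE /cofactor.
apply: c_rvM; first exact: c_rv_cst.
by apply: c_rv_det => k l; under eq_fun do rewrite !mxE; exact: cA.
Qed.

Lemma c_rv_minor_residual t m r (W : T -> 'M[R[i]]_(t, m)) (y : T -> 'rV[R[i]]_m)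
    (f : 'I_r -> 'I_t) (h : 'I_r -> 'I_m) k :
  mx_rv W -> mx_rv y -> c_rv (fun x => minor_residual (W x) f h (y x) k).
Proof.
move=> cW cy; apply: c_rvB.
  by apply: c_rvM; [apply: c_rv_det; exact: mx_rv_mxsub|exact: cy].
apply: mx_rv_mul; first apply: mx_rv_mul.
- exact: mx_rv_mxsub.
- by apply: mx_rv_adj; exact: mx_rv_mxsub.
- by apply: mx_rv_mxsub; exact: mx_rv_mxsub.
Qed.

Definition minor_event t m s (M : T -> 'M[R[i]]_(t, m)) : set T :=
  \bigcup_(fh in [set: {ffun 'I_s -> 'I_t} * {ffun 'I_s -> 'I_m}])
     [set x | \det (mxsub fh.1 fh.2 (M x)) != 0].

Lemma measurable_minor_event t m s (M : T -> 'M[R[i]]_(t, m)) :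
  mx_rv M -> measurable (minor_event s M).
Proof.
move=> cM; apply: fin_bigcup_measurable; first exact: finite_finset.
by move=> fh _; apply/c_rv_measurable_neq/c_rv_det; exact: mx_rv_mxsub.
Qed.

Lemma minor_eventP t m s (M : T -> 'M[R[i]]_(t, m)) x :
  minor_event s M x <->
  exists (f : 'I_s -> 'I_t) (h : 'I_s -> 'I_m), \det (mxsub f h (M x)) != 0.
Proof.
split=> [[[f h] _ /= detN0]|[f [h detN0]]]; first by exists f, h.
by exists ([ffun i => f i], [ffun i => h i]) => //=; rewrite mxsub_ffun.
Qed.

(* The rank is [r] iff some [r]-minor and no larger minor is nonzero. *)
Lemma measurable_rank_eq t m (M : T -> 'M[R[i]]_(t, m)) r :
  mx_rv M -> measurable [set x | \rank (M x) = r].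
Proof.
move=> cM.
have -> : [set x | \rank (M x) = r] =
    minor_event r M `&` \bigcap_(s in [set s | (r < s <= t)%N]) ~` minor_event s M.
  apply/seteqP; split=> x /=.
    move=> rk; split; first by apply/minor_eventP; rewrite -rk; exact: exists_rank_minor.
    move=> s /andP[rs _] /minor_eventP[f [h /minor_neq0_rank]].
    by rewrite rk leqNgt rs.
  move=> [/minor_eventP[f [h /minor_neq0_rank r_le]] no_minor].
  apply/eqP; rewrite eqn_leq r_le andbT leqNgt; apply/negP => r_lt.
  apply: (no_minor (\rank (M x))); first by rewrite /= r_lt rank_leq_row.
  by apply/minor_eventP; exact: exists_rank_minor.
apply: measurableI; first exact: measurable_minor_event.
by apply: bigcap_measurableType => s _; apply/measurableC/measurable_minor_event.
Qed.

Lemma measurable_rank_eq_rank t1 t2 m (M1 : T -> 'M[R[i]]_(t1, m))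
    (M2 : T -> 'M[R[i]]_(t2, m)) :
  mx_rv M1 -> mx_rv M2 -> measurable [set x | \rank (M1 x) = \rank (M2 x)].
Proof.
move=> c1 c2.
have -> : [set x | \rank (M1 x) = \rank (M2 x)] = \bigcup_(r in [set r | (r <= t1)%N])
    ([set x | \rank (M1 x) = r] `&` [set x | \rank (M2 x) = r]).
  apply/seteqP; split=> [x rkE|x [r _ []]] /=; last by move=> ->.
  by exists (\rank (M1 x)); rewrite /= ?rank_leq_row.
by apply: bigcup_measurable => r _; apply: measurableI; exact: measurable_rank_eq.
Qed.

End matrix_random_variables.

HB.instance Definition _ (R : realType) := isPointed.Build R[i] 0.

Definition CBorel_gen (R : realType) : set (set R[i]) :=
  [set (@complex.Re R) @^-1` B | B in measurable]
  `|` [set (@complex.Im R) @^-1` B | B in measurable].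

(* The measurable sets of [CBorelType R] are, by conversion, the [CBorel R] sets. *)
Definition CBorelType (R : realType) := g_sigma_algebraType (@CBorel_gen R).

Lemma c_rv_measurable_fun (R : realType) d (T : measurableType d) (f : T -> R[i]) :
  c_rv f -> measurable_fun setT (f : T -> CBorelType R).
Proof. by move=> cf _ B mB; rewrite setTI; exact: cf. Qed.

Definition independent_of (R : realType) d (T : measurableType d)
    (P : probability T R) (G : set (set T)) (X : T -> R[i]) :=
  forall A B, G A -> CBorel R B -> P (A `&` X @^-1` B) = (P A * P (X @^-1` B))%E.

Section independence_of_a_coordinate.
Context (R : realType) d (T : measurableType d) (P : probability T R).
Context (J : finType) (X : J -> T -> R[i]).
Hypotheses (X_rv : forall p, c_rv (X p)) (X_indep : mutually_independent P X).

Definition cylinders_except (q : J) : set (set T) :=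
  [set A | exists B : J -> set R[i], [/\ forall p, CBorel R (B p), B q = setT &
     A = \bigcap_(p in [set: J]) X p @^-1` B p]].

Lemma cylinders_except_measurable q : cylinders_except q `<=` measurable.
Proof.
move=> _ [B [cB _ ->]]; apply: fin_bigcap_measurable; first exact: finite_finset.
by move=> p _; exact: X_rv (cB p).
Qed.

Lemma cylinders_except_preimage q p B : p != q -> CBorel R B ->
  cylinders_except q (X p @^-1` B).
Proof.
move=> pq cB; exists (fun p' => if p' == p then B else setT); split.
- by move=> p'; case: ifP => // _; exact: (@measurableT _ (CBorelType R)).
- by rewrite eq_sym (negbTE pq).
- apply/seteqP; split=> x /=; last by move/(_ p I); rewrite eqxx.
  by move=> Bx p' _; case: ifP => // /eqP ->.
Qed.

Lemma cylinders_except_setI_closed q : setI_closed (cylinders_except q).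
Proof.
move=> _ _ [B [cB Bq ->]] [B' [cB' B'q ->]].
exists (fun p => B p `&` B' p); split.
- by move=> p; apply: (@measurableI _ (CBorelType R)); [exact: cB|exact: cB'].
- by rewrite Bq B'q setIT.
- by rewrite -bigcapI.
Qed.

Lemma independent_cylinders_except q : independent_of P (cylinders_except q) (X q).
Proof.
move=> _ B [C [cC Cq ->]] cB.
pose C' p := if p == q then B else C p.
have -> : \bigcap_(p in [set: J]) X p @^-1` C p `&` X q @^-1` B =
    \bigcap_(p in [set: J]) X p @^-1` C' p.
  apply/seteqP; split=> x /=.
    by move=> [XC XB] p _; rewrite /C'; case: eqP => [->|_] //; exact: XC.
  move=> XC'; split; last by have := XC' q I; rewrite /C' eqxx.
  by move=> p _; have := XC' p I; rewrite /C'; case: eqP => [->|//]; rewrite Cq.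
rewrite !X_indep => [|p|p]; last 2 first.
- by exists (C p).
- by exists (C' p) => //; rewrite /C'; case: ifP.
rewrite (bigD1 q) //= [in RHS](bigD1 q) //= /C' eqxx Cq preimage_setT.
rewrite probability_setT mul1e muleC; congr (_ * _)%E.
by apply: eq_bigr => p /negbTE ->.
Qed.

(* Dynkin's pi-lambda theorem, starting from the pi-system of cylinders. *)
Lemma independent_sigma_cylinders_except q :
  independent_of P <<s cylinders_except q >> (X q).
Proof.
move=> A B sA cB; have mY : measurable (X q @^-1` B) by exact: X_rv.
have sigma_sub : <<s cylinders_except q >> `<=` @measurable _ T.
  apply: smallest_sub; first exact: sigma_algebra_measurable.
  exact: cylinders_except_measurable.
have finP E : measurable E -> exists r : R, P E = r%:E.
  by move=> mE; exists (fine (P E)); rewrite fineK ?fin_num_measure.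
move: A sA; apply: (@dynkin_induction _ (g_sigma_algebraType (cylinders_except q))) => //.
- exact: cylinders_except_setI_closed.
- by rewrite /= setTI probability_setT mul1e.
- by move=> A cA; exact: independent_cylinders_except.
- move=> S /sigma_sub mS indepS /=.
  rewrite setIC -setDE probability_setC //.
  have : P (X q @^-1` B) = (P (X q @^-1` B `\` S) + P S * P (X q @^-1` B))%E.
    by rewrite setIC in indepS; rewrite -indepS; exact: measureDI.
  have [a ->] := finP _ (measurableD mY mS); have [s ->] := finP _ mS.
  have [y ->] := finP _ mY.
  by rewrite -EFinM -EFinD -EFinB -EFinM => -[yE]; rewrite mulrBl mul1r {1}yE addrK.
- move=> F mF tF indepF; have mF' k := sigma_sub _ (mF k).
  rewrite setI_bigcupl measure_bigcup //=; last 2 first.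
  + by move=> k _; exact: measurableI.
  + exact: trivIset_setIr.
  have [y yE] := finP _ mY.
  rewrite measure_bigcup //= yE muleC -nneseriesZl //.
  by apply: eq_eseriesr => k _; rewrite indepF yE muleC.
Qed.

End independence_of_a_coordinate.

Lemma c_rv_fst (R : realType) d1 d2 (T1 : measurableType d1) (T2 : measurableType d2)
    (W : T1 -> R[i]) :
  c_rv W -> c_rv (fun p : T1 * T2 => W p.1).
Proof.
move=> cW B cB; rewrite (_ : _ @^-1` _ = W @^-1` B `*` setT).
  by apply: measurableX => //; exact: cW.
by apply/seteqP; split=> -[x y] //= [].
Qed.

Lemma c_rv_snd (R : realType) d (T1 : measurableType d) :
  c_rv (fun p : T1 * CBorelType R => p.2).
Proof.
move=> B cB; rewrite (_ : _ @^-1` _ = setT `*` B); first exact: measurableX.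
by apply/seteqP; split=> -[x y] //= [].
Qed.

Definition affine_root (T : Type) (R : realType) (X U V : T -> R[i]) : set T :=
  [set x | X x * U x + V x = 0 /\ U x != 0].

Section affine_root_null.
Context (R : realType) d (T : measurableType d) (P : probability T R).
Variables (G : set (set T)) (X : T -> R[i]).
Hypotheses (G_measurable : G `<=` measurable) (X_rv : c_rv X).
Hypothesis X_indep : independent_of P <<s G >> X.
Local Notation TG := (g_sigma_algebraType G).
Local Notation C := (CBorelType R).

Let sigmaG_measurable : <<s G >> `<=` @measurable _ T.
Proof. by apply: smallest_sub => //; exact: sigma_algebra_measurable. Qed.

Let measurable_idG : measurable_fun setT (id : T -> TG).
Proof. by move=> _ A mA; rewrite setTI; exact: sigmaG_measurable. Qed.

Let measurable_pair : measurable_fun setT (fun x : T => ((x : TG), (X x : C))).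
Proof. by apply: measurable_fun_pair => //; exact: c_rv_measurable_fun. Qed.

Let lawG := distribution P (mfun_Sub (mem_set measurable_idG)).
Let lawX := distribution P (mfun_Sub (mem_set (c_rv_measurable_fun X_rv))).

(* Independence says that the law of [x |-> (x, X x)] agrees with [lawG \x lawX]
   on rectangles, hence everywhere. *)
Lemma law_pair_product (S : set (TG * C)) : measurable S ->
  P ((fun x : T => ((x : TG), (X x : C))) @^-1` S) = (lawG \x lawX)%E S.
Proof.
move=> mS; pose law_pair := distribution P (mfun_Sub (mem_set measurable_pair)).
have rect A B : measurable A -> measurable B ->
    law_pair (A `*` B) = (lawG A * lawX B)%E.
  by move=> mA mB; exact: X_indep mA mB.
by rewrite (product_measure_unique rect mS).
Qed.

(* By Fubini, the [x]-section [{z | z * U x + V x = 0}] is a single point when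
   [U x != 0], which [X] avoids almost surely. *)
Lemma affine_root_negligible (U V : TG -> R[i]) :
  (forall c, P (X @^-1` [set c]) = 0%E) -> c_rv U -> c_rv V ->
  P.-negligible (affine_root X U V).
Proof.
move=> X_atomless cU cV.
pose S : set (TG * C) := [set p | p.2 * U p.1 + V p.1 = 0 /\ U p.1 != 0].
have mS : measurable S.
  have cU1 : c_rv (fun p : TG * C => U p.1) := c_rv_fst cU.
  have cV1 : c_rv (fun p : TG * C => V p.1) := c_rv_fst cV.
  apply: measurableI; last exact: c_rv_measurable_neq cU1.
  by apply/c_rv_measurable_eq/c_rvD => //; apply/c_rvM => //; exact: c_rv_snd.
have mE := measurable_pair measurableT mS; rewrite setTI in mE.
exists (affine_root X U V); split => //.
rewrite (_ : P _ = (lawG \x lawX)%E S); last exact: law_pair_product.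
apply: integral0_eq => x _ /=.
have [U0|UN0] := eqVneq (U x) 0.
  rewrite (_ : xsection S x = set0) ?measure0 //.
  by apply/seteqP; split=> z //=; rewrite /xsection /= inE /S /= U0 eqxx => -[].
rewrite (_ : xsection S x = [set - V x / U x]); first exact: X_atomless.
apply/seteqP; split=> z; rewrite /xsection /= inE /S /=.
  by move=> [/eqP + _]; rewrite addr_eq0 => /eqP <-; rewrite mulfK.
by move=> ->; rewrite divfK // addNr.
Qed.

End affine_root_null.

Lemma negligible_fin_bigcup d (T : ringOfSetsType d) (R : realFieldType)
    (mu : {content set T -> \bar R}) (I : finType) (F : I -> set T) :
  (forall i, mu.-negligible (F i)) -> mu.-negligible (\bigcup_i F i).
Proof.
move=> negF; have -> : \bigcup_i F i = \big[setU/set0]_(i <- enum I) F i.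
  rewrite -bigcup_seq; congr bigcup; apply/seteqP; split=> i //= _.
  by rewrite mem_enum.
by elim/big_ind: _ => //; [exact: negligible_set0|exact: negligibleU].
Qed.

Section rank_stall.
Context (T : Type) (R : realType) (m1 m2 : nat).
Variables (g : 'I_2 -> 'I_2 -> nat -> T -> R[i]).
Variables (v1 : nat -> T -> 'rV[R[i]]_m1) (v2 : nat -> T -> 'rV[R[i]]_m2).

Lemma Aev_new_row_sub i w : Aev g v1 v2 i w ->
  (row_mx (g i2 i1 i w *: v1 i w) (g i2 i2 i w *: v2 i w) <= Mat g v1 v2 i w)%MS.
Proof.
move=> rankE.
have old_rows : (Mat g v1 v2 i w <= Mat g v1 v2 i.+1 w)%MS.
  have -> : Mat g v1 v2 i w = rowsub (widen_ord (leqnSn i)) (Mat g v1 v2 i.+1 w).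
    by apply/matrixP => s c; rewrite !mxE.
  exact: rowsub_sub.
have new_row : (row_mx (g i2 i1 i w *: v1 i w) (g i2 i2 i w *: v2 i w)
    <= Mat g v1 v2 i.+1 w)%MS.
  by rewrite (_ : row_mx _ _ = row ord_max (Mat g v1 v2 i.+1 w)) ?row_sub //;
    apply/rowP => c; rewrite !mxE.
apply: submx_trans new_row _; move: (mxrank_leqif_sup old_rows).2.
by rewrite rankE eqxx => /esym.
Qed.

Lemma Bev_rankE i : Bev g v1 v2 i =
  [set w | \rank (col_mx (Mat g v1 v2 i w) (row_mx (v1 i w) 0)) = \rank (Mat g v1 v2 i w)]
  `&` [set w | \rank (col_mx (Mat g v1 v2 i w) (row_mx 0 (v2 i w))) =
               \rank (Mat g v1 v2 i w)].
Proof.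
by apply/seteqP; split=> w /= [u1_sub u2_sub]; split; apply/submx_rank_col_mx.
Qed.

Local Notation res1 i f h k :=
  (fun w => minor_residual (Mat g v1 v2 i w) f h (row_mx (v1 i w) 0) k).
Local Notation res2 i f h k :=
  (fun w => minor_residual (Mat g v1 v2 i w) f h (row_mx 0 (v2 i w)) k).

Lemma step_event_affine_root i w : (Aev g v1 v2 i `&` ~` Bev g v1 v2 i) w ->
  exists (r : 'I_i.+1) (f : {ffun 'I_r -> 'I_i}) (h : {ffun 'I_r -> 'I_(m1 + m2)})
    (k : 'I_(m1 + m2)),
    affine_root (g i2 i1 i) (res1 i f h k) (fun w => g i2 i2 i w * res2 i f h k w) w \/
    affine_root (g i2 i2 i) (res2 i f h k) (fun w => g i2 i1 i w * res1 i f h k w) w.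
Proof.
move=> [/Aev_new_row_sub new_row notB].
have [f [h detN0]] := exists_rank_minor (Mat g v1 v2 i w).
rewrite -mxsub_ffun in detN0.
exists (Ordinal (rank_leq_row (Mat g v1 v2 i w) : _ < i.+1)%N),
  [ffun j => f j], [ffun j => h j].
have combination k : g i2 i1 i w * res1 i [ffun j => f j] [ffun j => h j] k w +
    g i2 i2 i w * res2 i [ffun j => f j] [ffun j => h j] k w = 0.
  rewrite -minor_residual_lin.
  move/(minor_residualP _ detN0): new_row => /(_ k) <-; congr minor_residual.
  by rewrite !scale_row_mx !scaler0 add_row_mx addr0 add0r.
have [u1_sub|u1_notsub] := boolP (row_mx (v1 i w) 0 <= Mat g v1 v2 i w)%MS.
  have /(minor_residualP _ detN0)/existsNP[k /eqP resN0] :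
      ~ (row_mx 0 (v2 i w) <= Mat g v1 v2 i w)%MS by move=> u2_sub; exact: notB.
  by exists k; right; split=> //; rewrite addrC combination.
have /(minor_residualP _ detN0)/existsNP[k /eqP resN0] := negP u1_notsub.
by exists k; left; split=> //; exact: combination.
Qed.

End rank_stall.

Section past_measurability.
Context d (T : measurableType d) (R : realType).
Variables (g : 'I_2 -> 'I_2 -> nat -> T -> R[i]).

Lemma past_sigma_monotone s t : (s <= t)%N -> past_sigma g s `<=` past_sigma g t.
Proof.
move=> st; apply: smallest_sub; first exact: smallest_sigma_algebra.
move=> A [k [j [s' [s's gA]]]]; apply: sub_gen_smallest.
by exists k, j, s'; split=> //; exact: leq_trans s's st.
Qed.

Lemma c_rv_past t (Y : T -> R[i]) :
  past_sigma g t `<=` measurable -> past_measurable g t Y -> c_rv Y.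
Proof. by move=> past_meas pY B cB; exact: past_meas _ (pY B cB). Qed.

Lemma c_rv_g_past t k j s :
  past_sigma g t `<=` measurable -> (s < t)%N -> c_rv (g k j s).
Proof.
move=> past_meas st B cB; apply: past_meas; apply: sub_gen_smallest.
by exists k, j, s; split=> //; exists B.
Qed.

Lemma mx_rv_row_past t m (v : T -> 'rV[R[i]]_m) :
  past_sigma g t `<=` measurable ->
  (forall a, past_measurable g t (fun w => v w 0 a)) -> mx_rv v.
Proof. by move=> past_meas pv i a; rewrite ord1; exact: c_rv_past (pv a). Qed.

Lemma mx_rv_Mat m1 m2 (v1 : nat -> T -> 'rV[R[i]]_m1) (v2 : nat -> T -> 'rV[R[i]]_m2) t :
  past_sigma g t `<=` measurable ->
  (forall s a, (s < t)%N -> past_measurable g s (fun w => v1 s w 0 a)) ->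
  (forall s a, (s < t)%N -> past_measurable g s (fun w => v2 s w 0 a)) ->
  mx_rv (Mat g v1 v2 t).
Proof.
move=> past_meas pv1 pv2; apply: mx_rv_rows => s.
have past_s : past_sigma g s `<=` measurable.
  exact: subset_trans (past_sigma_monotone (ltnW (ltn_ord s))) past_meas.
by apply: mx_rv_row_mx; apply: mx_rvZ; do ?[exact: c_rv_g_past past_meas _];
  apply: mx_rv_row_past past_s _ => a; [exact: pv1|exact: pv2].
Qed.

End past_measurability.

Section stalling_steps_are_null.
Context d (T : measurableType d) (R : realType) (P : probability T R).
Variables (n m1 m2 : nat) (g : 'I_2 -> 'I_2 -> nat -> T -> R[i]).
Variables (v1 : nat -> T -> 'rV[R[i]]_m1) (v2 : nat -> T -> 'rV[R[i]]_m2).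
Hypothesis g_rv : forall k j s, (s < n)%N -> c_rv (g k j s).
Hypothesis g_indep :
  mutually_independent P (fun p : 'I_2 * 'I_2 * 'I_n => g p.1.1 p.1.2 p.2).
Hypothesis g_atomless :
  forall k j s, (s < n)%N -> forall c : R[i], P (g k j s @^-1` [set c]) = 0%E.
Hypothesis v1_past :
  forall s (a : 'I_m1), (s < n)%N -> past_measurable g s (fun w => v1 s w 0 a).
Hypothesis v2_past :
  forall s (a : 'I_m2), (s < n)%N -> past_measurable g s (fun w => v2 s w 0 a).

Local Notation gn := (fun p : 'I_2 * 'I_2 * 'I_n => g p.1.1 p.1.2 p.2).
Local Notation Texcept q := (g_sigma_algebraType (cylinders_except gn q)).
Local Notation res1 i f h k :=
  (fun w => minor_residual (Mat g v1 v2 i w) f h (row_mx (v1 i w) 0) k).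
Local Notation res2 i f h k :=
  (fun w => minor_residual (Mat g v1 v2 i w) f h (row_mx 0 (v2 i w)) k).

Let gn_rv p : c_rv (gn p). Proof. exact: g_rv. Qed.

Lemma past_sigma_measurable t : (t <= n)%N -> past_sigma g t `<=` measurable.
Proof.
move=> tn; apply: smallest_sub; first exact: sigma_algebra_measurable.
move=> _ [k [j [s [st [B cB <-]]]]]; exact: g_rv (leq_trans st tn) _ cB.
Qed.

Lemma past_sigma_except (q : 'I_2 * 'I_2 * 'I_n) :
  past_sigma g q.2 `<=` <<s cylinders_except gn q >>.
Proof.
apply: smallest_sub; first exact: smallest_sigma_algebra.
move=> _ [k [j [s [sq [B cB <-]]]]]; apply: sub_gen_smallest.
have sn : (s < n)%N := ltn_trans sq (ltn_ord q.2).
apply: (cylinders_except_preimage gn (p := (k, j, Ordinal sn))) => //.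
by apply: contraTneq sq => <-; rewrite ltnn.
Qed.

Lemma measurable_step_event i : (i < n)%N ->
  measurable (Aev g v1 v2 i `&` ~` Bev g v1 v2 i).
Proof.
move=> lin; have mx_rv_Mat_past t : (t <= i.+1)%N -> mx_rv (Mat g v1 v2 t).
  move=> ti; apply: mx_rv_Mat; first exact: past_sigma_measurable (leq_trans ti lin).
    by move=> s a st; apply: v1_past; exact: leq_trans st (leq_trans ti lin).
  by move=> s a st; apply: v2_past; exact: leq_trans st (leq_trans ti lin).
have past_meas := past_sigma_measurable (ltnW lin).
have Wi := mx_rv_Mat_past i (leqnSn i).
apply: measurableI; first exact: measurable_rank_eq_rank (mx_rv_Mat_past _ _) Wi.
rewrite Bev_rankE; apply/measurableC/measurableI; apply: (measurable_rank_eq_rank _ Wi);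
  apply: (mx_rv_col_mx Wi); apply: mx_rv_row_mx; do ?exact: mx_rv_cst;
  apply: (mx_rv_row_past past_meas) => a; [exact: v1_past|exact: v2_past].
Qed.

Lemma negligible_affine_root_except i (lin : (i < n)%N) (k j k' j' : 'I_2)
    (U V : Texcept (k, j, Ordinal lin) -> R[i]) :
  (k', j') != (k, j) -> c_rv U -> c_rv V ->
  P.-negligible (affine_root (g k j i) U (fun w => g k' j' i w * V w)).
Proof.
move=> kj'_neq cU cV; pose q := (k, j, Ordinal lin).
apply: (affine_root_negligible (G := cylinders_except gn q) (X := gn q)) => //.
- exact: cylinders_except_measurable.
- exact: independent_sigma_cylinders_except.
- exact: g_atomless.
apply: c_rvM cV => B cB; apply: sub_gen_smallest.
apply: (cylinders_except_preimage gn (p := (k', j', Ordinal lin))) => //.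
by apply: contra kj'_neq => /eqP [-> ->].
Qed.

Lemma c_rv_residual_except i (lin : (i < n)%N) k j r (f : 'I_r -> 'I_i) h c :
  c_rv (res1 i f h c : Texcept (k, j, Ordinal lin) -> R[i]) /\
  c_rv (res2 i f h c : Texcept (k, j, Ordinal lin) -> R[i]).
Proof.
have past := @past_sigma_except (k, j, Ordinal lin).
have W : mx_rv (Mat g v1 v2 i : Texcept (k, j, Ordinal lin) -> _).
  apply: (@mx_rv_Mat _ (Texcept (k, j, Ordinal lin)) R g) past _ _ => s a si.
    exact: (v1_past _ (ltn_trans si lin)).
  exact: (v2_past _ (ltn_trans si lin)).
split; apply: c_rv_minor_residual W _; apply: mx_rv_row_mx; do ?exact: mx_rv_cst;
  apply: (@mx_rv_row_past _ (Texcept (k, j, Ordinal lin)) R g _ _ _ past) => a.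
  exact: v1_past.
exact: v2_past.
Qed.

Lemma negligible_step_event i : (i < n)%N ->
  P.-negligible (Aev g v1 v2 i `&` ~` Bev g v1 v2 i).
Proof.
move=> lin.
pose N (r : 'I_i.+1)
    (fhk : {ffun 'I_r -> 'I_i} * {ffun 'I_r -> 'I_(m1 + m2)} * 'I_(m1 + m2)) :=
  let: (f, h, k) := fhk in
  affine_root (g i2 i1 i) (res1 i f h k) (fun w => g i2 i2 i w * res2 i f h k w) `|`
  affine_root (g i2 i2 i) (res2 i f h k) (fun w => g i2 i1 i w * res1 i f h k w).
apply: (@negligibleS _ _ _ _ (\bigcup_r \bigcup_fhk N r fhk)).
  move=> w Ew; have [r [f [h [k Nw]]]] := step_event_affine_root Ew.
  by exists r; last exists (f, h, k); last exact: Nw.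
apply: negligible_fin_bigcup => r; apply: negligible_fin_bigcup => -[[f h] k].
have [res1_21 res2_21] := c_rv_residual_except lin i2 i1 f h k.
have [res1_22 res2_22] := c_rv_residual_except lin i2 i2 f h k.
apply: negligibleU.
  by apply: (negligible_affine_root_except (k' := i2) (j' := i2) _ res1_21 res2_21).
by apply: (negligible_affine_root_except (k' := i2) (j' := i1) _ res2_22 res1_22).
Qed.

End stalling_steps_are_null.

Theorem lemma6 (d : measure_display) (T : measurableType d) (R : realType)
  (P : probability T R) (n m1 m2 : nat) (m1_gt0 : (0 < m1)%N) (m2_gt0 : (0 < m2)%N)
  (g : 'I_2 -> 'I_2 -> nat -> T -> R[i])
  (v1 : nat -> T -> 'rV[R[i]]_m1) (v2 : nat -> T -> 'rV[R[i]]_m2) :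
  (* each g_kj(t) is a complex random variable *)
  (forall k j s, (s < n)%N -> c_rv (g k j s)) ->
  (* independence of the 4n variables *)
  mutually_independent P (fun p : 'I_2 * 'I_2 * 'I_n => g p.1.1 p.1.2 p.2) ->
  (* identically distributed *)
  (forall k j s k' j' s', (s < n)%N -> (s' < n)%N ->
     forall B, CBorel R B -> P (g k j s @^-1` B) = P (g k' j' s' @^-1` B)) ->
  (* continuous (atomless) distribution *)
  (forall k j s, (s < n)%N -> forall c : R[i], P (g k j s @^-1` [set c]) = 0%E) ->
  (* rows of V_1, V_2 at time s are deterministic functions of g(s'), s' < s *)
  (forall s (a : 'I_m1), (s < n)%N -> past_measurable g s (fun w => v1 s w 0 a)) ->
  (forall s (a : 'I_m2), (s < n)%N -> past_measurable g s (fun w => v2 s w 0 a)) ->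
  P (\bigcup_(i in [set i | (i < n)%N])
       (Aev g v1 v2 i `&` ~` Bev g v1 v2 i)) = 0%E.
Proof.
move=> g_rv g_indep _ g_atomless v1_past v2_past.
apply/negligibleP.
  apply: bigcup_measurable => i lin.
  exact: measurable_step_event g_rv v1_past v2_past _ lin.
apply: (@negligibleS _ _ _ _
  (\bigcup_(i : 'I_n) (Aev g v1 v2 i `&` ~` Bev g v1 v2 i))).
  by move=> w [i /= lin Ew]; exists (Ordinal lin).
apply: negligible_fin_bigcup => i.
exact: negligible_step_event g_rv g_indep g_atomless v1_past v2_past _ (ltn_ord i).
Qed.
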